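(* Fix $\rho\in(0,2]$. For any $N\ge1$, $\kappa\ne0$ and $\omega_1,\dots,\omega_N\in\mathbb{R}$ with \[ N\ge\frac2\rho,\qquad\frac{\max_i|\omega_i|}{|\kappa|}<\frac{\rho^{1.5}}{16}, \] there exists an equilibrium $(\theta_i^0)_{i=1}^N$ of the system $\dot\theta_i=\omega_i-\frac{\kappa}{N}\sum_{j=1}^N(1+\cos\theta_j)\sin\theta_i$ whose order parameter $\frac1N\sum_j(1+\cos\theta_j^0)$ lies in $[\frac14\rho,\frac32\rho]$. Moreover, it can be chosen so that there exists $1\le m\le N$ with $\frac\rho4<\frac mN\le\frac\rho2$ and \[ \frac{2|\omega_i|}{3\rho|\kappa|}\le|\theta_i^0|\le\frac{2\pi|\omega_i|}{\rho|\kappa|}\ (i=1,\dots,m),\qquad\frac{2|\omega_i|}{3\rho|\kappa|}\le|\theta_i^0-\pi|\le\frac{2\pi|\omega_i|}{\rho|\kappa|}\ (i=m+1,\dots,N). \]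
   Context: An equilibrium is an initial datum for which the right-hand side vanishes for every $i$ (so the solution is constant). *)

From Stdlib Require Import Reals Lra.
Open Scope R_scope.

Fixpoint sumN (N : nat) (f : nat -> R) : R :=
  match N with
  | O => 0
  | S n => sumN n f + f n
  end.

Definition order_param (N : nat) (theta : nat -> R) : R :=
  / INR N * sumN N (fun j => 1 + cos (theta j)).

Definition rhs (N : nat) (kappa : R) (omega theta : nat -> R) (i : nat) : R :=
  omega i - kappa / INR N * sumN N (fun j => 1 + cos (theta j)) * sin (theta i).

Definition equilibrium (N : nat) (kappa : R) (omega theta : nat -> R) : Prop :=
  forall i, (i < N)%nat -> rhs N kappa omega theta i = 0.

Fixpoint maxabsN (N : nat) (f : nat -> R) : R :=
  match N with
  | O => 0
  | S n => Rmax (maxabsN n f) (Rabs (f n))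
  end.

(* Look for an equilibrium in which m oscillators sit near 0 and the other
   N - m near pi:  theta_j = asin s_j  for j < m  and  theta_j = pi - asin s_j
   otherwise, with  s_j = omega_j / (kappa r).  Such a configuration is an
   equilibrium as soon as its order parameter equals r.  The order parameter
   is continuous in r, exceeds r at r = rho/4 (the m near-0 oscillators alone
   contribute m/N > rho/4) and is below r at r = 3 rho / 2 (the near-0 ones
   contribute at most 2m/N <= rho, the near-pi ones at most s_j^2 each), so
   the intermediate value theorem yields a self-consistent r.  The bound
   max |omega_j| / |kappa| < rho^1.5 / 16 is what makes every s_j^2 at
   r = 3 rho / 2 smaller than rho / 576.  The phase estimates then come
   from  |s| <= |asin s| <= 3/2 |s|  for |s| <= 1/2. *)

From Stdlib Require Import Reals Lra Lia ZArith.
Open Scope R_scope.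

Lemma sumN_le n f g :
  (forall j, (j < n)%nat -> f j <= g j) -> sumN n f <= sumN n g.
Proof.
  induction n as [|n IH]; intros Hfg; simpl; [lra|].
  assert (sumN n f <= sumN n g) by (apply IH; intros; apply Hfg; lia).
  assert (f n <= g n) by (apply Hfg; lia).
  lra.
Qed.

Lemma sumN_add n f g : sumN n (fun j => f j + g j) = sumN n f + sumN n g.
Proof. induction n as [|n IH]; simpl; [lra|]. rewrite IH. ring. Qed.

Lemma sumN_const n c : sumN n (fun _ => c) = INR n * c.
Proof. induction n as [|n IH]; simpl sumN; [simpl; ring|]. rewrite IH, S_INR. ring. Qed.

Lemma sumN_indicator n m c :
  sumN n (fun j => if Nat.ltb j m then c else 0) = INR (Nat.min n m) * c.
Proof.
  induction n as [|n IH]; simpl sumN; [simpl; ring|].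
  rewrite IH. destruct (Nat.ltb_spec n m).
  - replace (Nat.min (S n) m) with (S (Nat.min n m)) by lia. rewrite S_INR. ring.
  - replace (Nat.min (S n) m) with (Nat.min n m) by lia. ring.
Qed.

Lemma continuity_pt_sumN n (f : nat -> R -> R) x :
  (forall j, (j < n)%nat -> continuity_pt (f j) x) ->
  continuity_pt (fun y => sumN n (fun j => f j y)) x.
Proof.
  induction n as [|n IH]; intros Hf; simpl.
  - apply continuity_pt_const. intros a b. reflexivity.
  - apply (continuity_pt_plus (fun y => sumN n (fun j => f j y)) (f n)).
    + apply IH. intros; apply Hf; lia.
    + apply Hf; lia.
Qed.

Lemma maxabsN_ge n f j : (j < n)%nat -> Rabs (f j) <= maxabsN n f.
Proof.
  induction n as [|n IH]; intros Hj; [lia|]. simpl.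
  destruct (Nat.eq_dec j n) as [->|Hne].
  - apply Rmax_r.
  - eapply Rle_trans; [apply IH; lia | apply Rmax_l].
Qed.

Lemma asin_bounds x : 0 <= x <= 1/2 -> x <= asin x <= 3/2 * x.
Proof.
  intros Hx. set (y := asin x).
  assert (Hsin : sin y = x) by (apply sin_asin; lra).
  assert (Hrange := asin_bound x). fold y in Hrange.
  pose proof PI_4. pose proof PI2_3_2.
  assert (Hy0 : 0 <= y).
  { destruct (Rle_or_lt 0 y) as [Hle|Hlt]; auto.
    assert (0 < sin (- y)) by (apply sin_gt_0; lra).
    rewrite sin_neg in *. lra. }
  assert (Hxy : x <= y).
  { destruct (Req_dec y 0) as [Hy|Hy].
    - rewrite Hy, sin_0 in Hsin. lra.
    - pose proof (sin_lt_x y ltac:(lra)). lra. }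
  split; [exact Hxy|].
  (* sin y >= y - y^3/6, and y - y^3/6 > 1/2 on [1, pi/2] *)
  pose proof (sin_bound y 0 Hy0 ltac:(lra)) as [Hcubic _].
  unfold sin_approx, sin_term in Hcubic. simpl in Hcubic. rewrite Hsin in Hcubic.
  destruct (Rle_or_lt y 1).
  - assert (y * y * y <= y) by nra. nra.
  - assert ((y - 2) * (y * y + 2 * y - 2) <= 0) by nra. nra.
Qed.

Lemma Rabs_asin_bounds s :
  Rabs s <= 1/2 -> Rabs s <= Rabs (asin s) <= 3/2 * Rabs s.
Proof.
  intros Hs. destruct (Rle_or_lt 0 s) as [Hpos|Hneg].
  - rewrite Rabs_pos_eq in * by lra.
    pose proof (asin_bounds s ltac:(lra)).
    rewrite Rabs_pos_eq by lra. lra.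
  - rewrite Rabs_left in * by lra.
    pose proof (asin_bounds (- s) ltac:(lra)) as Hb. rewrite asin_opp in Hb.
    rewrite Rabs_left1 by lra. lra.
Qed.

Lemma sqrt_one_sub_sqr_bounds x : Rabs x <= 1 -> 1 - x² <= sqrt (1 - x²) <= 1.
Proof.
  intros Hx.
  assert (Hx2 : 0 <= x² <= 1).
  { split; [apply Rle_0_sqr|]. rewrite Rsqr_abs. pose proof (Rabs_pos x). unfold Rsqr. nra. }
  pose proof (sqrt_sqrt (1 - x²) ltac:(lra)). pose proof (sqrt_pos (1 - x²)).
  pose proof (sqrt_le_1_alt (1 - x²) 1 ltac:(lra)) as Hle1. rewrite sqrt_1 in Hle1.
  split; [nra | exact Hle1].
Qed.

Lemma Rabs_le_between x a : Rabs x <= a -> - a <= x <= a.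
Proof.
  intros Hx. pose proof (Rle_abs x). pose proof (Rle_abs (- x)).
  rewrite Rabs_Ropp in *. lra.
Qed.

Definition two_cluster_phases (m : nat) (s : nat -> R) (j : nat) : R :=
  if Nat.ltb j m then asin (s j) else PI - asin (s j).

Lemma two_cluster_phases_lt m s j : (j < m)%nat -> two_cluster_phases m s j = asin (s j).
Proof. intros Hj. unfold two_cluster_phases. rewrite (proj2 (Nat.ltb_lt j m) Hj). reflexivity. Qed.

Lemma two_cluster_phases_ge_sub_PI m s j :
  (m <= j)%nat -> two_cluster_phases m s j - PI = - asin (s j).
Proof. intros Hj. unfold two_cluster_phases. rewrite (proj2 (Nat.ltb_ge j m) Hj). ring. Qed.

Section TwoClusterPhases.

Variables (m : nat) (s : nat -> R).

Lemma sin_two_cluster_phases j :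
  Rabs (s j) <= 1 -> sin (two_cluster_phases m s j) = s j.
Proof.
  intros Hs. apply Rabs_le_between in Hs. unfold two_cluster_phases.
  destruct (Nat.ltb j m).
  - apply sin_asin; auto.
  - rewrite sin_minus, cos_PI, sin_PI, sin_asin by auto. ring.
Qed.

Lemma cos_two_cluster_phases j :
  Rabs (s j) <= 1 ->
  cos (two_cluster_phases m s j)
  = if Nat.ltb j m then sqrt (1 - (s j)²) else - sqrt (1 - (s j)²).
Proof.
  intros Hs. apply Rabs_le_between in Hs. unfold two_cluster_phases.
  destruct (Nat.ltb j m).
  - apply cos_asin; auto.
  - rewrite cos_minus, cos_PI, sin_PI, cos_asin by auto. ring.
Qed.

Lemma one_add_cos_two_cluster_phases_ge j :
  Rabs (s j) <= 1 ->
  (if Nat.ltb j m then 1 else 0) <= 1 + cos (two_cluster_phases m s j).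
Proof.
  intros Hs. rewrite cos_two_cluster_phases by exact Hs.
  pose proof (sqrt_pos (1 - (s j)²)). pose proof (sqrt_one_sub_sqr_bounds (s j) Hs).
  destruct (Nat.ltb j m); lra.
Qed.

Lemma one_add_cos_two_cluster_phases_le j :
  Rabs (s j) <= 1 ->
  1 + cos (two_cluster_phases m s j) <= (if Nat.ltb j m then 2 else 0) + (s j)².
Proof.
  intros Hs. rewrite cos_two_cluster_phases by exact Hs.
  pose proof (sqrt_one_sub_sqr_bounds (s j) Hs). pose proof (Rle_0_sqr (s j)).
  destruct (Nat.ltb j m); lra.
Qed.

Variable N : nat.
Hypothesis N_pos : (0 < N)%nat.
Hypothesis m_le_N : (m <= N)%nat.
Hypothesis s_le_1 : forall j, (j < N)%nat -> Rabs (s j) <= 1.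

Let sumN_cluster_indicator c :
  sumN N (fun j => if Nat.ltb j m then c else 0) = INR m * c.
Proof. rewrite sumN_indicator, Nat.min_r by exact m_le_N. reflexivity. Qed.

Lemma order_param_two_cluster_ge :
  INR m / INR N <= order_param N (two_cluster_phases m s).
Proof.
  unfold order_param, Rdiv. rewrite Rmult_comm.
  apply Rmult_le_compat_l; [apply Rlt_le, Rinv_0_lt_compat, lt_0_INR, N_pos|].
  rewrite <- (Rmult_1_r (INR m)), <- sumN_cluster_indicator.
  apply sumN_le. intros j Hj. apply one_add_cos_two_cluster_phases_ge, s_le_1, Hj.
Qed.

Lemma order_param_two_cluster_le eps :
  (forall j, (j < N)%nat -> (s j)² <= eps) ->
  order_param N (two_cluster_phases m s) <= 2 * (INR m / INR N) + eps.
Proof.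
  intros Heps.
  assert (HN : 0 < INR N) by (apply lt_0_INR, N_pos).
  assert (Hsum : sumN N (fun j => 1 + cos (two_cluster_phases m s j))
                 <= INR m * 2 + INR N * eps).
  { rewrite <- sumN_cluster_indicator, <- sumN_const, <- sumN_add.
    apply sumN_le. intros j Hj.
    pose proof (one_add_cos_two_cluster_phases_le j (s_le_1 j Hj)).
    pose proof (Heps j Hj). lra. }
  unfold order_param.
  replace (2 * (INR m / INR N) + eps) with (/ INR N * (INR m * 2 + INR N * eps))
    by (field; lra).
  apply Rmult_le_compat_l; [apply Rlt_le, Rinv_0_lt_compat, HN | exact Hsum].
Qed.

End TwoClusterPhases.

Lemma equilibrium_of_self_consistent N kappa omega theta r :
  kappa <> 0 -> r <> 0 -> order_param N theta = r ->
  (forall i, (i < N)%nat -> sin (theta i) = omega i / (kappa * r)) ->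
  equilibrium N kappa omega theta.
Proof.
  intros Hk Hr Horder Hsin i Hi. unfold rhs.
  replace (kappa / INR N * sumN N (fun j => 1 + cos (theta j)))
    with (kappa * order_param N theta) by (unfold order_param, Rdiv; ring).
  rewrite Horder, Hsin by exact Hi. field. auto.
Qed.

Lemma Rabs_div_mul w k r : 0 < r -> Rabs (w / (k * r)) = Rabs w / (Rabs k * r).
Proof.
  intros Hr. unfold Rdiv.
  rewrite Rabs_mult, Rabs_inv, Rabs_mult, (Rabs_pos_eq r) by lra. reflexivity.
Qed.

Definition cluster_ansatz (m : nat) (kappa : R) (omega : nat -> R) (r : R) : nat -> R :=
  two_cluster_phases m (fun j => omega j / (kappa * r)).

Lemma continuity_pt_order_param_cluster_ansatz N m kappa omega r :
  kappa * r <> 0 ->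
  (forall j, (j < N)%nat -> Rabs (omega j / (kappa * r)) < 1) ->
  continuity_pt (fun r => order_param N (cluster_ansatz m kappa omega r)) r.
Proof.
  intros Hkr Hs. unfold order_param.
  apply (continuity_pt_scal
           (fun r => sumN N (fun j => 1 + cos (cluster_ansatz m kappa omega r j)))).
  apply (continuity_pt_sumN N (fun j r => 1 + cos (cluster_ansatz m kappa omega r j))).
  intros j Hj.
  assert (Hsj : -1 < omega j / (kappa * r) < 1).
  { destruct (Rabs_def2 _ _ (Hs j Hj)). lra. }
  assert (Hasin : continuity_pt (fun r => asin (omega j / (kappa * r))) r).
  { apply (continuity_pt_comp (fun r => omega j / (kappa * r)) asin).
    - reg.
    - apply derivable_continuous_pt, derivable_pt_asin, Hsj. }
  apply (continuity_pt_plus (fun _ => 1)); [apply continuity_pt_const; intros ? ?; reflexivity|].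
  unfold cluster_ansatz, two_cluster_phases. destruct (Nat.ltb j m).
  - apply (continuity_pt_comp (fun r => asin (omega j / (kappa * r))) cos);
      [exact Hasin | apply continuity_cos].
  - apply (continuity_pt_comp (fun r => PI - asin (omega j / (kappa * r))) cos);
      [| apply continuity_cos].
    apply (continuity_pt_minus (fun _ => PI)); [apply continuity_pt_const; intros ? ?; reflexivity|].
    exact Hasin.
Qed.

Lemma exists_self_consistent_cluster_ansatz N m kappa omega a b :
  0 < a < b -> kappa <> 0 ->
  (forall r j, a <= r -> (j < N)%nat -> Rabs (omega j / (kappa * r)) < 1) ->
  a < order_param N (cluster_ansatz m kappa omega a) ->
  order_param N (cluster_ansatz m kappa omega b) < b ->
  exists r, a <= r <= b /\ order_param N (cluster_ansatz m kappa omega r) = r.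
Proof.
  intros Hab Hk Hs Ha Hb.
  destruct (Ranalysis5.IVT_interv
              (fun r => r - order_param N (cluster_ansatz m kappa omega r)) a b)
    as [r [Hr Hroot]]; [| lra | lra | lra |].
  - intros r Hr.
    apply (continuity_pt_minus (fun r => r)); [apply derivable_continuous_pt, derivable_pt_id|].
    apply continuity_pt_order_param_cluster_ansatz.
    + apply Rmult_integral_contrapositive_currified; lra.
    + intros j Hj. apply Hs; [lra | exact Hj].
  - exists r. split; [exact Hr | lra].
Qed.

Section SmallFrequencies.

Variables (N : nat) (kappa rho : R) (omega : nat -> R).
Hypothesis rho_range : 0 < rho <= 2.
Hypothesis kappa_neq0 : kappa <> 0.
Hypothesis frequencies_small : maxabsN N omega / Rabs kappa < rho * sqrt rho / 16.

Let Rabs_sine_target_le r j :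
  0 < r -> (j < N)%nat -> Rabs (omega j / (kappa * r)) <= maxabsN N omega / Rabs kappa / r.
Proof.
  intros Hr Hj. rewrite Rabs_div_mul by exact Hr.
  assert (Hk : 0 < Rabs kappa) by (apply Rabs_pos_lt, kappa_neq0).
  replace (maxabsN N omega / Rabs kappa / r) with (maxabsN N omega / (Rabs kappa * r))
    by (field; lra).
  apply Rmult_le_compat_r; [apply Rlt_le, Rinv_0_lt_compat; nra | apply maxabsN_ge, Hj].
Qed.

Lemma Rabs_sine_target_le_half r j :
  rho / 4 <= r -> (j < N)%nat -> Rabs (omega j / (kappa * r)) <= 1 / 2.
Proof.
  intros Hr Hj.
  (* sqrt rho <= 2 turns the hypothesis into  maxabsN / |kappa| < rho / 8 *)
  assert (Hsqrt : sqrt rho <= 2).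
  { rewrite <- sqrt_Rsqr by lra. apply sqrt_le_1_alt. unfold Rsqr. lra. }
  pose proof (Rabs_sine_target_le r j ltac:(lra) Hj).
  set (B := maxabsN N omega / Rabs kappa) in *.
  replace (B / r) with (B * / r) in * by reflexivity.
  assert (B * / r * r = B) by (field; lra).
  assert (0 < / r) by (apply Rinv_0_lt_compat; lra).
  nra.
Qed.

Lemma Rsqr_sine_target_le j :
  (j < N)%nat -> (omega j / (kappa * (3 / 2 * rho)))² <= rho / 576.
Proof.
  intros Hj.
  pose proof (Rabs_sine_target_le (3 / 2 * rho) j ltac:(lra) Hj) as Hs.
  set (B := maxabsN N omega / Rabs kappa) in *.
  assert (HB : 0 <= B).
  { pose proof (maxabsN_ge N omega j Hj). pose proof (Rabs_pos (omega j)).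
    apply Rle_mult_inv_pos; [lra | apply Rabs_pos_lt, kappa_neq0]. }
  assert (HB2 : B * B < rho * rho * rho / 256).
  { pose proof (sqrt_sqrt rho ltac:(lra)). pose proof (sqrt_pos rho). nra. }
  set (x := omega j / (kappa * (3 / 2 * rho))) in *.
  assert (Hx : Rabs x * (3 * rho) <= 2 * B).
  { replace (2 * B) with (B / (3 / 2 * rho) * (3 * rho)) by (field; lra).
    apply Rmult_le_compat_r; lra. }
  rewrite Rsqr_abs. unfold Rsqr. pose proof (Rabs_pos x).
  assert (Hx2 : Rabs x * Rabs x * (9 * rho * rho) <= 4 * (B * B)).
  { replace (Rabs x * Rabs x * (9 * rho * rho)) with ((Rabs x * (3 * rho)) * (Rabs x * (3 * rho)))
      by ring.
    replace (4 * (B * B)) with ((2 * B) * (2 * B)) by ring.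
    apply Rmult_le_compat; nra. }
  apply (Rmult_le_reg_r (9 * rho * rho)); [nra | lra].
Qed.

End SmallFrequencies.

Lemma exists_nat_in_half_interval x : 1 <= x -> exists m, (1 <= m)%nat /\ x / 2 < INR m <= x.
Proof.
  intros Hx. destruct (base_Int_part x) as [Hle Hgt].
  assert (Hpos : (1 <= Int_part x)%Z).
  { apply le_IZR. assert (0 < Int_part x)%Z by (apply lt_IZR; lra).
    apply IZR_le. lia. }
  exists (Z.to_nat (Int_part x)).
  rewrite INR_IZR_INZ, Z2Nat.id by lia. split; [lia|].
  apply IZR_le in Hpos. split; [destruct (Rle_or_lt 2 x); lra | exact Hle].
Qed.

Lemma exists_cluster_size N rho :
  0 < rho <= 2 -> 2 / rho <= INR N ->
  exists m, (1 <= m <= N)%nat /\ rho / 4 < INR m / INR N <= rho / 2.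
Proof.
  intros Hrho HN2.
  assert (HNrho : 2 <= INR N * rho).
  { replace 2 with (2 / rho * rho) by (field; lra). apply Rmult_le_compat_r; lra. }
  destruct (exists_nat_in_half_interval (INR N * rho / 2)) as [m [Hm1 Hm]]; [lra|].
  assert (HN : 0 < INR N) by nra.
  exists m. split; [split; [exact Hm1|] | split].
  - apply INR_le. nra.
  - apply (Rmult_lt_reg_r (INR N)); [exact HN|].
    replace (INR m / INR N * INR N) with (INR m) by (field; lra). lra.
  - apply (Rmult_le_reg_r (INR N)); [exact HN|].
    replace (INR m / INR N * INR N) with (INR m) by (field; lra). lra.
Qed.

Lemma Rabs_asin_phase_bounds rho kappa w r :
  0 < rho -> kappa <> 0 -> rho / 4 <= r <= 3 / 2 * rho ->
  Rabs (w / (kappa * r)) <= 1 / 2 ->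
  2 * Rabs w / (3 * rho * Rabs kappa) <= Rabs (asin (w / (kappa * r)))
  <= 2 * PI * Rabs w / (rho * Rabs kappa).
Proof.
  intros Hrho Hk Hr Hs.
  pose proof (Rabs_asin_bounds _ Hs) as Hasin.
  rewrite Rabs_div_mul in Hasin by lra.
  assert (Hkpos : 0 < Rabs kappa) by (apply Rabs_pos_lt, Hk).
  set (t := Rabs w / (Rabs kappa * r)) in Hasin.
  assert (Ht : 0 <= t) by (apply Rle_mult_inv_pos; [apply Rabs_pos | nra]).
  replace (Rabs w) with (t * Rabs kappa * r) by (unfold t; field; lra).
  pose proof PI2_3_2.
  replace (2 * (t * Rabs kappa * r) / (3 * rho * Rabs kappa)) with (2 * r / (3 * rho) * t)
    by (field; lra).
  replace (2 * PI * (t * Rabs kappa * r) / (rho * Rabs kappa)) with (2 * PI * r / rho * t)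
    by (field; lra).
  assert (2 * r / (3 * rho) <= 1).
  { apply (Rmult_le_reg_r (3 * rho)); [lra|].
    replace (2 * r / (3 * rho) * (3 * rho)) with (2 * r) by (field; lra). lra. }
  assert (3 / 2 <= 2 * PI * r / rho).
  { apply (Rmult_le_reg_r rho); [lra|].
    replace (2 * PI * r / rho * rho) with (2 * PI * r) by (field; lra). nra. }
  split; nra.
Qed.

Theorem theorem2p20 (rho : R) (N : nat) (kappa : R) (omega : nat -> R) :
  0 < rho <= 2 ->
  (1 <= N)%nat ->
  kappa <> 0 ->
  INR N >= 2 / rho ->
  maxabsN N omega / Rabs kappa < rho * sqrt rho / 16 ->
  exists theta : nat -> R,
    equilibrium N kappa omega theta /\
    rho / 4 <= order_param N theta <= 3 / 2 * rho /\
    exists m : nat,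
      (1 <= m <= N)%nat /\
      rho / 4 < INR m / INR N <= rho / 2 /\
      (forall i, (i < m)%nat ->
         2 * Rabs (omega i) / (3 * rho * Rabs kappa) <= Rabs (theta i)
         <= 2 * PI * Rabs (omega i) / (rho * Rabs kappa)) /\
      (forall i, (m <= i < N)%nat ->
         2 * Rabs (omega i) / (3 * rho * Rabs kappa) <= Rabs (theta i - PI)
         <= 2 * PI * Rabs (omega i) / (rho * Rabs kappa)).
Proof.
  intros Hrho HN Hk HNrho Hsmall.
  pose proof (Rabs_sine_target_le_half N kappa rho omega Hrho Hk Hsmall) as Hhalf.
  assert (Hle1 : forall r j, rho / 4 <= r -> (j < N)%nat -> Rabs (omega j / (kappa * r)) <= 1)
    by (intros r j Hr Hj; pose proof (Hhalf r j Hr Hj); lra).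
  destruct (exists_cluster_size N rho Hrho (Rge_le _ _ HNrho)) as [m [Hm Hratio]].
  destruct (exists_self_consistent_cluster_ansatz N m kappa omega (rho / 4) (3 / 2 * rho))
    as [r [Hr Hfix]]; [lra | exact Hk | .. ].
  { intros r j Hr Hj. pose proof (Hhalf r j Hr Hj). lra. }
  { pose proof (order_param_two_cluster_ge m (fun j => omega j / (kappa * (rho / 4))) N
                  ltac:(lia) ltac:(lia) (fun j => Hle1 (rho / 4) j (Rle_refl _))).
    unfold cluster_ansatz. lra. }
  { assert (H32 : rho / 4 <= 3 / 2 * rho) by lra.
    pose proof (order_param_two_cluster_le m (fun j => omega j / (kappa * (3 / 2 * rho))) N
                  ltac:(lia) ltac:(lia) (fun j => Hle1 (3 / 2 * rho) j H32) (rho / 576)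
                  (Rsqr_sine_target_le N kappa rho omega Hrho Hk Hsmall)).
    unfold cluster_ansatz. lra. }
  exists (cluster_ansatz m kappa omega r). split; [|split; [lra|]].
  - apply (equilibrium_of_self_consistent N kappa omega _ r Hk ltac:(lra) Hfix).
    intros i Hi. apply sin_two_cluster_phases, Hle1; [lra | exact Hi].
  - exists m. split; [exact Hm | split; [exact Hratio | split]]; intros i Hi; unfold cluster_ansatz.
    + rewrite two_cluster_phases_lt by exact Hi.
      apply Rabs_asin_phase_bounds; [lra | exact Hk | lra | apply Hhalf; [lra | lia]].
    + rewrite two_cluster_phases_ge_sub_PI, Rabs_Ropp by apply Hi.
      apply Rabs_asin_phase_bounds; [lra | exact Hk | lra | apply Hhalf; [lra | lia]].
Qed.
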